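(* For every finite set $U$ in a commutative group $G$, \[ \alpha(U)\le\beta(U),\quad \alpha'(U)\le4\beta'(U),\quad \alpha''(U)\le3\beta''(U), \] \[ \beta(U)\le\alpha(U)^2,\quad \beta''(U)\le\alpha(U)^3, \] \[ \alpha''(U)\le\alpha(U)^2,\quad \beta''(U)\le\beta''(2U)\le\beta(U)^2, \] where $2U=U+U$.
   Context: With $A,B$ ranging over nonempty finite subsets of $G$: $\alpha(U)=\inf_{A\supset U,B\supset U}\frac{|A+B|}{\sqrt{|A||B|}}$; $\alpha'(U)=\inf_{A\supset U,B\supset U,|A|=|B|}\frac{|A+B|}{|A|}$; $\alpha''(U)=\inf_{A\supset U}\frac{|A+A|}{|A|}$; $\beta(U)=\inf_{A,B}\frac{|A+B+U|}{\sqrt{|A||B|}}$; $\beta'(U)=\inf_{A,B,|A|=|B|}\frac{|A+B+U|}{\sqrt{|A||B|}}$; $\beta''(U)=\inf_A\frac{|A+A+U|}{|A|}$. *)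

From HB Require Import structures.
From mathcomp Require Import all_boot all_order all_algebra.
From mathcomp Require Import finmap.
From mathcomp Require Import boolp classical_sets reals.
Set Implicit Arguments. Unset Strict Implicit. Unset Printing Implicit Defensive.
Import Order.TTheory GRing.Theory Num.Theory.
Local Open Scope ring_scope.
Local Open Scope fset_scope.

Section Defs.
Variables (R : realType) (G : zmodType).

Definition sumset (A B : {fset G}) : {fset G} := [fset (a + b)%R | a in A, b in B].

Definition cardR (A : {fset G}) : R := (#|` A|)%:R.

Definition alpha (U : {fset G}) : R :=
  inf [set r : R | exists A B : {fset G}, [/\ A != fset0, B != fset0,
     U `<=` A, U `<=` B & r = cardR (sumset A B) / Num.sqrt (cardR A * cardR B)]].

Definition alpha' (U : {fset G}) : R :=
  inf [set r : R | exists A B : {fset G}, [/\ A != fset0, B != fset0,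
     U `<=` A, U `<=` B & #|` A| = #|` B| /\ r = cardR (sumset A B) / cardR A]].

Definition alpha'' (U : {fset G}) : R :=
  inf [set r : R | exists A : {fset G}, [/\ A != fset0,
     U `<=` A & r = cardR (sumset A A) / cardR A]].

Definition beta (U : {fset G}) : R :=
  inf [set r : R | exists A B : {fset G}, [/\ A != fset0, B != fset0
     & r = cardR (sumset (sumset A B) U) / Num.sqrt (cardR A * cardR B)]].

Definition beta' (U : {fset G}) : R :=
  inf [set r : R | exists A B : {fset G}, [/\ A != fset0, B != fset0,
     #|` A| = #|` B|
     & r = cardR (sumset (sumset A B) U) / Num.sqrt (cardR A * cardR B)]].

Definition beta'' (U : {fset G}) : R :=
  inf [set r : R | exists A : {fset G},
     A != fset0 /\ r = cardR (sumset (sumset A A) U) / cardR A].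

End Defs.

From HB Require Import structures.
From mathcomp Require Import all_boot all_order all_algebra.
From mathcomp Require Import finmap.
From mathcomp Require Import boolp classical_sets reals.
From mathcomp Require Import zify ring lra.
Set Implicit Arguments. Unset Strict Implicit. Unset Printing Implicit Defensive.
Import Order.TTheory GRing.Theory Num.Theory.
Local Open Scope ring_scope.
Local Open Scope fset_scope.

(* Everything rests on Petridis' lemma: if a nonempty X in A has |X+C|/|X| at
   most that of A and minimal among its own nonempty subsets, then
   |X+C+D| |X| <= |X+C| |X+D| for every D (induction on D), and iterating
   gives Pluennecke's bound |X+hC| <= K^h |X| with K = |A+C|/|A|.
   With C = B+U and D = U, a translate of X+U contains U and satisfies
   |(X+U)+(Y+U)| <= (|A+B+U|/|A|) |X+U| for every Y in B; such sets witness
   alpha and alpha''.  For alpha' the smaller witness is padded to the size of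
   the other with disjoint translates of itself, at the cost of a factor 2
   (for finite G the whole group is a witness).  The bounds by powers of alpha
   and beta are Pluennecke's bound for C = B and C = B+U.  The argument gives
   the sharper alpha' <= 2 beta' and alpha'' <= beta''. *)

Section Sumsets.
Variable G : zmodType.
Implicit Types (A B C D W Z : {fset G}) (x t : G).
Local Open Scope ring_scope.

Lemma sumsetP A B x :
  reflect (exists a b, [/\ a \in A, b \in B & x = a + b]) (x \in sumset A B).
Proof.
apply: (iffP (imfset2P _ _ _ _ _)) => [[a ha [b hb ->]]|[a [b [ha hb ->]]]].
  by exists a, b.
by exists a => //; exists b.
Qed.

Lemma mem_sumset A B a b : a \in A -> b \in B -> a + b \in sumset A B.
Proof. by move=> ha hb; apply/sumsetP; exists a, b. Qed.

Lemma sumsetC A B : sumset A B = sumset B A.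
Proof.
by apply/fsetP => x; apply/sumsetP/sumsetP => -[a [b [ha hb ->]]];
  exists b, a; rewrite addrC.
Qed.

Lemma sumsetA A B C : sumset A (sumset B C) = sumset (sumset A B) C.
Proof.
apply/fsetP => x; apply/sumsetP/sumsetP.
  move=> [a [y [ha /sumsetP[b [c [hb hc ->]]] ->]]].
  by exists (a + b), c; rewrite mem_sumset // addrA.
move=> [y [c [/sumsetP[a [b [ha hb ->]]] hc ->]]].
by exists a, (b + c); rewrite mem_sumset // addrA.
Qed.

Lemma sumsetAC A B C : sumset (sumset A B) C = sumset (sumset A C) B.
Proof. by rewrite -sumsetA (sumsetC B) sumsetA. Qed.

Lemma sumsetACA A B C D :
  sumset (sumset A B) (sumset C D) = sumset (sumset A C) (sumset B D).
Proof. by rewrite sumsetA (sumsetAC A B C) -sumsetA. Qed.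

Lemma sumsetS A A' B B' : A `<=` A' -> B `<=` B' -> sumset A B `<=` sumset A' B'.
Proof.
move=> /fsubsetP sA /fsubsetP sB; apply/fsubsetP => x /sumsetP[a [b [ha hb ->]]].
by rewrite mem_sumset ?sA ?sB.
Qed.

Lemma sumsetfs0 A : sumset A fset0 = fset0.
Proof.
by apply/fsetP => x; rewrite inE; apply/sumsetP => -[a [b [_]]]; rewrite inE.
Qed.

Lemma sumsetUr A B C : sumset A (B `|` C) = sumset A B `|` sumset A C.
Proof.
apply/fsetP => x; rewrite inE; apply/sumsetP/orP.
  by move=> [a [b [ha]]]; rewrite inE => /orP[] hb ->; [left|right]; rewrite mem_sumset.
by case=> /sumsetP[a [b [ha hb ->]]]; exists a, b; rewrite inE hb ?orbT.
Qed.

Lemma fsubset_neq0 A B : A `<=` B -> A != fset0 -> B != fset0.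
Proof.
by move=> /fsubsetP sAB /fset0Pn[a ha]; apply/fset0Pn; exists a; apply: sAB.
Qed.

Definition translate A t := [fset a + t | a in A].

Lemma mem_translate A t x : (x \in translate A t) = (x - t \in A).
Proof.
apply/imfsetP/idP => [[a ha ->]|h]; first by rewrite addrK.
by exists (x - t); rewrite ?subrK.
Qed.

Lemma card_translate A t : #|` translate A t| = #|` A|.
Proof. by apply: card_in_imfset => x y _ _ /addIr. Qed.

Lemma sumset1 A t : sumset A [fset t] = translate A t.
Proof.
apply/fsetP => x; rewrite mem_translate; apply/sumsetP/idP.
  by move=> [a [b [ha]]]; rewrite inE => /eqP -> ->; rewrite addrK.
by move=> h; exists (x - t), t; rewrite inE eqxx subrK.
Qed.

Lemma sumset0 A : sumset A [fset 0] = A.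
Proof. by apply/fsetP => x; rewrite sumset1 mem_translate subr0. Qed.

Lemma translate_sumset A B t : translate (sumset A B) t = sumset (translate A t) B.
Proof. by rewrite -!sumset1 sumsetAC. Qed.

Lemma card_sumset_translate Z W s t :
  #|` sumset (translate Z s) (translate W t)| = #|` sumset Z W|.
Proof.
by rewrite -translate_sumset sumsetC -translate_sumset !card_translate sumsetC.
Qed.

Lemma fsubset_translate_sumset A B t : t \in B -> translate A t `<=` sumset A B.
Proof. by move=> tB; rewrite -sumset1 sumsetS // fsub1set. Qed.

Lemma fsubset_translate_sumset_opp A B a :
  a \in A -> B `<=` translate (sumset A B) (- a).
Proof.
by move=> aA; apply/fsubsetP => b bB; rewrite mem_translate opprK addrC mem_sumset.
Qed.

Lemma leq_card_sumsetl A B : B != fset0 -> (#|` A| <= #|` sumset A B|)%N.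
Proof.
move=> /fset0Pn[b bB]; rewrite -(card_translate A b).
exact/fsubset_leq_card/fsubset_translate_sumset.
Qed.

Lemma leq_card_sumsetr A B : A != fset0 -> (#|` B| <= #|` sumset A B|)%N.
Proof. by rewrite sumsetC; apply: leq_card_sumsetl. Qed.

Lemma card_sumset_leq A B : (#|` sumset A B| <= #|` A| * #|` B|)%N.
Proof.
elim/fset1U_rect: B => [|b B bB IH]; first by rewrite sumsetfs0 cardfs0 muln0.
rewrite sumsetUr sumset1 cardfsU1 bB mulnS (leq_trans (leq_card_fsetU _ _)) //.
by rewrite card_translate leq_add2l.
Qed.

End Sumsets.

Section Petridis.
Variable G : zmodType.
Implicit Types (A C D E X Y : {fset G}) (d : G).
Local Open Scope ring_scope.

Lemma card_sumsetU1 E D d :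
  (#|` sumset E (d |` D)| + #|` sumset E D `&` translate E d| =
   #|` sumset E D| + #|` E|)%N.
Proof. by rewrite sumsetUr sumset1 fsetUC cardfsUI card_translate. Qed.

Definition growth_le C X Y :=
  (#|` sumset X C| * #|` Y| <= #|` sumset Y C| * #|` X|)%N.

Lemma growth_le_trans C X Y A :
  Y != fset0 -> growth_le C X Y -> growth_le C Y A -> growth_le C X A.
Proof.
rewrite -cardfs_gt0 /growth_le => Y0 XY YA; rewrite -(leq_pmul2r Y0).
have := leq_mul XY (leqnn #|` A|); have := leq_mul YA (leqnn #|` X|); nia.
Qed.

Lemma exists_min_growth C A : A != fset0 -> exists X, [/\ X `<=` A, X != fset0,
  growth_le C X A & forall Y, Y `<=` X -> Y != fset0 -> growth_le C X Y].
Proof.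
elim/finSet_rect: A => A IH A0.
have [Amin|] := pselect (forall Y, Y `<=` A -> Y != fset0 -> growth_le C A Y).
  by exists A; split; rewrite // /growth_le.
move=> /existsNP[Y /not_implyP[YA /not_implyP[Y0 /negP]]].
rewrite /growth_le -ltnNge => YltA.
have YpA : Y `<` A.
  by rewrite fproperEneq YA andbT; apply: contraTneq YltA => ->; rewrite ltnn.
have [X [XY X0 XYg Xmin]] := IH Y YpA Y0.
exists X; split => //; first exact: fsubset_trans XY YA.
exact: growth_le_trans Y0 XYg (ltnW YltA).
Qed.

Definition petridis_ineq C X := forall D,
  (#|` sumset (sumset X C) D| * #|` X| <= #|` sumset X C| * #|` sumset X D|)%N.

Lemma petridis_ineq_min C X :
  (forall Y, Y `<=` X -> Y != fset0 -> growth_le C X Y) -> petridis_ineq C X.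
Proof.
move=> Xmin; elim/(@fset1U_rect G) => [|d D _ IH]; first by rewrite !sumsetfs0 cardfs0.
set Y := [fset y in X | y + d \in sumset X D].
have YX : Y `<=` X by apply/fsubsetP => y; rewrite inE => /andP[].
have YC : translate (sumset Y C) d `<=`
          sumset (sumset X C) D `&` translate (sumset X C) d.
  apply/fsubsetP => z; rewrite mem_translate inE mem_translate => YCz.
  rewrite (fsubsetP (sumsetS YX (fsubset_refl C))) // andbT.
  move: YCz => /sumsetP[y [c [/[!inE] /andP[_ yd] cC /(canRL (subrK d)) ->]]].
  by rewrite addrAC sumsetAC mem_sumset.
have XD : sumset X D `&` translate X d `<=` translate Y d.
  apply/fsubsetP => z; rewrite inE !mem_translate => /andP[XDz Xz].
  by rewrite !inE Xz subrK.
have growthY : (#|` sumset X C| * #|` Y| <= #|` sumset Y C| * #|` X|)%N.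
  have [->|Y0] := eqVneq Y fset0; first by rewrite cardfs0 muln0.
  exact: Xmin.
have /(congr1 (muln^~ #|` X|)) := card_sumsetU1 (sumset X C) D d.
have /(congr1 (muln #|` sumset X C|)) := card_sumsetU1 X D d.
have := leq_mul (fsubset_leq_card YC) (leqnn #|` X|).
have := leq_mul (leqnn #|` sumset X C|) (fsubset_leq_card XD).
rewrite !card_translate.
(* zify would otherwise rewrite these cardinalities with truncated subtractions. *)
set I1 := #|` _ `&` translate (sumset X C) d|; set I2 := #|` _ `&` translate X d|.
nia.
Qed.

Lemma exists_petridis_subset C A : A != fset0 ->
  exists X, [/\ X `<=` A, X != fset0, growth_le C X A & petridis_ineq C X].
Proof.
move=> A0; have [X [XA X0 XAg Xmin]] := exists_min_growth C A0.
by exists X; split => //; apply: petridis_ineq_min.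
Qed.

Definition nfold C h := iter h (sumset C) [fset 0].

Lemma nfold0 C : nfold C 0 = [fset 0].
Proof. by []. Qed.

Lemma nfoldS C h : nfold C h.+1 = sumset C (nfold C h).
Proof. by []. Qed.

Lemma nfold2 C : nfold C 2 = sumset C C.
Proof. by rewrite !nfoldS nfold0 sumset0. Qed.

Lemma nfold3 C : nfold C 3 = sumset (sumset C C) C.
Proof. by rewrite nfoldS nfold2 sumsetA. Qed.

Lemma card_sumset_nfold C A X :
  X != fset0 -> growth_le C X A -> petridis_ineq C X -> forall h,
  (#|` sumset X (nfold C h)| * #|` A| ^ h <= #|` sumset A C| ^ h * #|` X|)%N.
Proof.
rewrite -cardfs_gt0 /growth_le => X0 XA XD; elim=> [|h IH].
  by rewrite nfold0 sumset0 !expn0 muln1 mul1n.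
rewrite -(leq_pmul2r X0) nfoldS sumsetA !expnS.
have := leq_mul (XD (nfold C h)) (leqnn (#|` A| * #|` A| ^ h)).
have := leq_mul XA IH; nia.
Qed.

Lemma plunnecke_ruzsa A C h : A != fset0 ->
  (#|` nfold C h.+1| * #|` A| ^ h <= #|` sumset A C| ^ h.+1)%N.
Proof.
move=> A0; have [X [XA X0 XAg XD]] := exists_petridis_subset C A0.
have a0 : (0 < #|` A|)%N by rewrite cardfs_gt0.
rewrite -(leq_pmul2r a0) -mulnA -expnSr.
apply: leq_trans (leq_mul (leq_card_sumsetr (nfold C h.+1) X0) (leqnn _)) _.
apply: leq_trans (card_sumset_nfold X0 XAg XD h.+1) _.
by rewrite leq_mul2l fsubset_leq_card ?orbT.
Qed.

End Petridis.

Section Supersets.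
Variable G : zmodType.
Implicit Types (A B T U V W X Y Z : {fset G}).
Local Open Scope ring_scope.

Lemma exists_subset_small_sumset A B U : A != fset0 ->
  exists2 X, X `<=` A & X != fset0 /\ forall Y, Y `<=` B ->
    (#|` sumset (sumset X U) (sumset Y U)| * #|` A| <=
     #|` sumset (sumset A B) U| * #|` sumset X U|)%N.
Proof.
move=> A0; have [X [XA X0 XAg XD]] := exists_petridis_subset (sumset B U) A0.
exists X => //; split => // Y YB.
have XBU : (#|` sumset (sumset X U) (sumset Y U)| <=
            #|` sumset (sumset X (sumset B U)) U|)%N.
  apply/fsubset_leq_card; rewrite sumsetA (sumsetAC X) -(sumsetA X Y).
  by rewrite !sumsetS.
move: XAg (XD U) XBU; rewrite /growth_le -cardfs_gt0 !sumsetA in X0 *.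
move=> XAg XD' XBU; rewrite -(leq_pmul2r X0).
have := leq_mul XBU (leqnn (#|` A| * #|` X|)); have := leq_mul XD' (leqnn #|` A|).
have := leq_mul XAg (leqnn #|` sumset X U|); nia.
Qed.

Lemma exists_supersets_small_sumset A B U : A != fset0 -> B != fset0 ->
  exists Z W, [/\ U `<=` Z, U `<=` W,
    (#|` sumset Z W| * #|` A| <= #|` sumset (sumset A B) U| * #|` Z|)%N &
    (#|` sumset Z W| * #|` B| <= #|` sumset (sumset A B) U| * #|` W|)%N].
Proof.
move=> A0 B0.
have [X XA [/fset0Pn[x Xx] XY]] := exists_subset_small_sumset B U A0.
have [Y YB [/fset0Pn[y Yy] YX]] := exists_subset_small_sumset A U B0.
exists (translate (sumset X U) (- x)), (translate (sumset Y U) (- y)).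
rewrite card_sumset_translate !card_translate; split.
- exact: fsubset_translate_sumset_opp.
- exact: fsubset_translate_sumset_opp.
- exact: XY.
- by rewrite sumsetC (sumsetC A); apply: YX.
Qed.

Lemma exists_superset_small_doubling A U : A != fset0 ->
  exists2 Z, U `<=` Z &
    (#|` sumset Z Z| * #|` A| <= #|` sumset (sumset A A) U| * #|` Z|)%N.
Proof.
move=> A0; have [X XA [/fset0Pn[x Xx] XX]] := exists_subset_small_sumset A U A0.
exists (translate (sumset X U) (- x)); first exact: fsubset_translate_sumset_opp.
by rewrite card_sumset_translate card_translate XX.
Qed.

Lemma exists_fsubset_card Z V m : Z `<=` V -> (#|` Z| <= m <= #|` V|)%N ->
  exists2 Z', Z `<=` Z' & Z' `<=` V /\ #|` Z'| = m.
Proof.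
move=> ZV /andP[Zm mV]; rewrite -(subnKC Zm) in mV *.
move: (m - #|` Z|)%N mV => k kV {m Zm}.
elim: k Z ZV kV => [|k IH] Z ZV kV; first by exists Z; rewrite ?addn0.
have /fset0Pn[v /[!inE] /andP[vZ vV]] : V `\` Z != fset0.
  by rewrite -cardfs_gt0 cardfsDS //; lia.
have [||Z' vZZ' [Z'V cardZ']] := IH (v |` Z).
- by rewrite fsubUset fsub1set vV ZV.
- by rewrite cardfsU1 vZ add1n addSnnS.
exists Z'; first exact: fsubset_trans (fsubsetU1 _ _) vZZ'.
by rewrite cardZ' cardfsU1 vZ add1n addSnnS.
Qed.

Section InfiniteGroup.
Hypothesis G_infinite : ~ exists F : {fset G}, forall g, g \in F.

Lemma exists_disjoint_translates Z k : Z != fset0 ->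
  exists T, [/\ 0 \in T, #|` T| = k.+1 & #|` sumset Z T| = (k.+1 * #|` Z|)%N].
Proof.
move=> /fset0Pn[z Zz]; elim: k => [|k [T [T0 cardT cardZT]]].
  by exists [fset 0]; rewrite inE cardfs1 sumset0 mul1n.
(* Choosing t outside Z + T - Z makes Z + t disjoint from Z + T. *)
pose F := sumset (sumset Z T) [fset - z | z in Z].
have [t /negP tF] : exists t, ~ t \in F.
  by apply/existsNP => FG; apply: G_infinite; exists F.
have tNT : t \notin T.
  apply: contra tF => Tt; rewrite -(addrK z t) (addrC t z).
  by apply: mem_sumset; [exact: mem_sumset | apply/imfsetP; exists z].
have disj : [disjoint translate Z t & sumset Z T].
  apply/fdisjointP => x; rewrite mem_translate => Zxt; apply: contra tF => ZTx.
  have -> : t = x + - (x - t) by rewrite opprB addrC subrK.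
  by rewrite mem_sumset //; apply/imfsetP; exists (x - t).
exists (t |` T); split; first by rewrite !inE T0 orbT.
  by rewrite cardfsU1 tNT cardT.
rewrite sumsetUr sumset1.
have /eqP -> : #|` translate Z t `|` sumset Z T| ==
                (#|` translate Z t| + #|` sumset Z T|)%N.
  by rewrite (leq_card_fsetU _ _).2.
by rewrite card_translate cardZT mulSn.
Qed.

Lemma card_sumset_pad Z W : Z != fset0 -> (#|` Z| <= #|` W|)%N ->
  exists2 Z', Z `<=` Z' & #|` Z'| = #|` W| /\
    (#|` sumset Z' W| * #|` Z| <= 2 * #|` sumset Z W| * #|` W|)%N.
Proof.
move=> Z0 ZW; have z0 : (0 < #|` Z|)%N by rewrite cardfs_gt0.
have [T [T0 cardT cardZT]] := exists_disjoint_translates (#|` W| %/ #|` Z|) Z0.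
have ZZT : Z `<=` sumset Z T by rewrite -{1}(sumset0 Z) sumsetS // fsub1set.
have WZT : (#|` W| <= #|` sumset Z T|)%N by rewrite cardZT ltnW // ltn_ceil.
have [Z' ZZ' [Z'ZT cardZ']] := exists_fsubset_card ZZT (introT andP (conj ZW WZT)).
exists Z' => //; split => //.
have Z'W : (#|` sumset Z' W| <= #|` sumset Z W| * #|` T|)%N.
  apply: leq_trans (card_sumset_leq _ _); rewrite -sumsetAC.
  exact/fsubset_leq_card/sumsetS.
have TZ : (#|` T| * #|` Z| <= 2 * #|` W|)%N.
  by rewrite cardT mulSn mul2n -addnn leq_add // leq_trunc_div.
have := leq_mul Z'W (leqnn #|` Z|); have := leq_mul (leqnn #|` sumset Z W|) TZ.
nia.
Qed.

End InfiniteGroup.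

Lemma exists_equal_supersets_small_sumset A B U :
  A != fset0 -> B != fset0 -> U != fset0 -> #|` A| = #|` B| ->
  exists Z W, [/\ U `<=` Z, U `<=` W, #|` Z| = #|` W| &
    (#|` sumset Z W| * #|` A| <= 2 * #|` sumset (sumset A B) U| * #|` Z|)%N].
Proof.
move=> A0 B0 U0 AB.
have As : (#|` A| <= #|` sumset (sumset A B) U|)%N.
  exact: leq_trans (leq_card_sumsetl _ B0) (leq_card_sumsetl _ U0).
have [[F FG]|G_infinite] := pselect (exists F : {fset G}, forall g, g \in F).
  have UF : U `<=` F by apply/fsubsetP.
  exists F, F; split => //.
  have FF : (#|` sumset F F| <= #|` F|)%N by apply/fsubset_leq_card/fsubsetP.
  have := leq_mul FF As; nia.
have [Z [W [UZ UW ZWA ZWB]]] := exists_supersets_small_sumset U A0 B0.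
have Z0 := fsubset_neq0 UZ U0; have W0 := fsubset_neq0 UW U0.
have z0 : (0 < #|` Z|)%N by rewrite cardfs_gt0.
have w0 : (0 < #|` W|)%N by rewrite cardfs_gt0.
have [ZW|/ltnW WZ] := leqP #|` Z| #|` W|.
  have [Z' ZZ' [cardZ' Z'W]] := card_sumset_pad G_infinite Z0 ZW.
  exists Z', W; split => //; first exact: fsubset_trans ZZ'.
  rewrite cardZ' -(leq_pmul2r z0).
  have := leq_mul Z'W (leqnn #|` A|); have := leq_mul ZWA (leqnn (2 * #|` W|)).
  nia.
have [W' WW' [cardW' W'Z]] := card_sumset_pad G_infinite W0 WZ.
exists Z, W'; split => //; first exact: fsubset_trans WW'.
rewrite sumsetC AB -(leq_pmul2r w0); rewrite sumsetC in ZWB.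
have := leq_mul W'Z (leqnn #|` B|); have := leq_mul ZWB (leqnn (2 * #|` Z|)).
nia.
Qed.

End Supersets.

Section Infimum.
Variable R : realType.
Local Open Scope ring_scope.
Local Open Scope classical_set_scope.
Implicit Types (E : set R) (c i : R).

Lemma exprnDr_lipschitz i n : 0 <= i ->
  exists2 K, 0 <= K & forall e, 0 <= e <= 1 -> (i + e) ^+ n <= i ^+ n + e * K.
Proof.
move=> i0; elim: n => [|n [K K0 IH]].
  by exists 0 => // e _; rewrite !expr0 mulr0 addr0.
exists (i ^+ n + (i + 1) * K) => [|e /andP[e0 e1]].
  by rewrite addr_ge0 ?exprn_ge0 ?mulr_ge0 ?addr_ge0.
have := ler_wpM2l (addr_ge0 i0 e0) (IH e (introT andP (conj e0 e1))).
have e1' : 0 <= 1 - e by rewrite subr_ge0.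
have := mulr_ge0 (mulr_ge0 e0 K0) e1'.
have := mulr_ge0 e0 (exprn_ge0 n i0).
rewrite !exprS; nra.
Qed.

Lemma le_inf_exprn E c n : E !=set0 -> (forall y, E y -> 0 <= y) ->
  (forall y, E y -> c <= y ^+ n) -> c <= inf E ^+ n.
Proof.
move=> E0 Ege0 cE; have infE : has_inf E by split => //; exists 0 => y /Ege0.
have i0 : 0 <= inf E by apply: lb_le_inf => // y /Ege0.
have [K K0 Kbound] := exprnDr_lipschitz n i0.
apply/ler_addgt0Pr => eps eps0; pose e := eps / (K + eps).
have e0 : 0 < e by rewrite divr_gt0 // ltr_wpDl.
have eK : e * K <= eps.
  by rewrite mulrAC ler_pdivrMr ?ltr_wpDl // ler_pM2l // lerDl ltW.
have e1 : e <= 1 by rewrite ler_pdivrMr ?ltr_wpDl // mul1r lerDr.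
have [y Ey yi] := inf_adherent e0 infE.
apply: le_trans (cE y Ey) (le_trans (_ : _ <= (inf E + e) ^+ n) _).
  by apply: lerXn2r; rewrite ?nnegrE ?(Ege0 y Ey) ?addr_ge0 ?(ltW e0) ?(ltW yi).
apply: le_trans (Kbound e _) _; first by rewrite (ltW e0) e1.
by rewrite lerD2l.
Qed.
End Infimum.

Section Ratios.
Variable R : realType.
Local Open Scope ring_scope.
Implicit Types p q s a b : nat.

Lemma ler_ratio p q p' q' : (0 < q)%N -> (0 < q')%N ->
  (p * q' <= p' * q)%N -> p%:R / q%:R <= p'%:R / q'%:R :> R.
Proof.
move=> q0 q'0 h; rewrite ler_pdivrMr ?ltr0n // mulrAC ler_pdivlMr ?ltr0n //.
by rewrite -!natrM ler_nat.
Qed.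

Lemma ratio_exprn p q n : (p%:R / q%:R) ^+ n = (p ^ n)%:R / (q ^ n)%:R :> R.
Proof. by rewrite expr_div_n !natrX. Qed.

Lemma sqr_ratio_sqrt p q : (p%:R / Num.sqrt q%:R) ^+ 2 = (p ^ 2)%:R / q%:R :> R.
Proof. by rewrite expr_div_n sqr_sqrtr // natrX. Qed.

Lemma ler_ratio_sqrt p q p' q' : (0 < q)%N -> (0 < q')%N ->
  (p ^ 2 * q' <= p' ^ 2 * q)%N ->
  p%:R / Num.sqrt q%:R <= p'%:R / Num.sqrt q'%:R :> R.
Proof.
move=> q0 q'0 h; rewrite -(ler_pXn2r (isT : 0 < 2)%N) ?nnegrE ?divr_ge0 ?sqrtr_ge0 //.
by rewrite !sqr_ratio_sqrt ler_ratio.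
Qed.

Lemma ler_ratio_sqr p s a b : (0 < a)%N -> (0 < b)%N ->
  (p * a <= s ^ 2)%N -> p%:R / b%:R <= (s%:R / Num.sqrt (a * b)%:R) ^+ 2 :> R.
Proof.
move=> a0 b0 h; rewrite sqr_ratio_sqrt ler_ratio ?muln_gt0 ?a0 //.
by rewrite mulnA leq_mul2r h orbT.
Qed.

Lemma ler_ratio_sqrt_sqr p x s a b : (0 < x)%N -> (0 < b)%N ->
  (x <= a)%N -> (b <= a)%N -> (p * a ^ 2 <= s ^ 2 * x)%N ->
  p%:R / Num.sqrt (x * b)%:R <= (s%:R / Num.sqrt (a * b)%:R) ^+ 2 :> R.
Proof.
move=> x0 b0 xa ba h; have a0 : (0 < a ^ 2)%N by rewrite expn_gt0 (leq_trans x0).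
rewrite -(ler_pXn2r (isT : 0 < 2)%N) ?nnegrE ?exprn_ge0 ?divr_ge0 ?sqrtr_ge0 //.
rewrite !sqr_ratio_sqrt ratio_exprn ler_ratio //;
  rewrite ?muln_gt0 ?expn_gt0 ?x0 ?b0 ?(leq_trans x0) //.
rewrite -(leq_pmul2r a0); apply: leq_trans (_ : _ <= (s ^ 2 * x) ^ 2 * b ^ 2)%N _.
  have -> : (p ^ 2 * (a * b) ^ 2 * a ^ 2 = (p * a ^ 2) ^ 2 * b ^ 2)%N by ring.
  by rewrite leq_mul2r leq_exp2r // h orbT.
have -> : ((s ^ 2 * x) ^ 2 * b ^ 2 = (s ^ 2) ^ 2 * (x * b) * (x * b))%N by ring.
by rewrite leq_mul2l -mulnn leq_mul ?orbT.
Qed.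

Lemma ler_ratio_cube p s a b : (0 < b)%N -> (b <= a)%N -> (p * a ^ 2 <= s ^ 3)%N ->
  p%:R / b%:R <= (s%:R / Num.sqrt (a * b)%:R) ^+ 3 :> R.
Proof.
move=> b0 ba h.
rewrite -(ler_pXn2r (isT : 0 < 2)%N) ?nnegrE ?exprn_ge0 ?divr_ge0 ?sqrtr_ge0 //.
rewrite -exprM (mulnC 3 2) exprM sqr_ratio_sqrt !ratio_exprn.
rewrite ler_ratio ?expn_gt0 ?muln_gt0 ?b0 ?(leq_trans b0) //.
have -> : (p ^ 2 * (a * b) ^ 3 = p ^ 2 * a ^ 3 * b * b ^ 2)%N by ring.
rewrite leq_mul2r; apply/orP; right.
apply: leq_trans (_ : _ <= (p * a ^ 2) ^ 2)%N _.
  have -> : ((p * a ^ 2) ^ 2 = p ^ 2 * a ^ 3 * a)%N by ring.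
  by rewrite leq_mul2l ba orbT.
by rewrite -!expnM (mulnC 2 3) expnM leq_exp2r.
Qed.

End Ratios.

Section InfimumBounds.
Variables (R : realType) (G : zmodType).
Local Open Scope ring_scope.
Local Open Scope classical_set_scope.
Implicit Types (A B V : {fset G}) (c : R).

Lemma inf_le_ge0 (E : set R) x : (forall y, E y -> 0 <= y) -> E x -> inf E <= x.
Proof. by move=> Ege0; apply: ge_inf; exists 0 => y /Ege0. Qed.

Lemma alpha_le V A B : (V `<=` A)%fset -> (V `<=` B)%fset -> V != fset0 ->
  alpha R V <= cardR R (sumset A B) / Num.sqrt (cardR R A * cardR R B).
Proof.
move=> VA VB V0; apply: inf_le_ge0 => [_ [A' [B' [_ _ _ _ ->]]]|].
  by rewrite divr_ge0 ?sqrtr_ge0.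
by exists A, B; split; rewrite ?(fsubset_neq0 VA) ?(fsubset_neq0 VB).
Qed.

Lemma alpha'_le V Z W : (V `<=` Z)%fset -> (V `<=` W)%fset -> V != fset0 ->
  #|` Z| = #|` W| -> alpha' R V <= cardR R (sumset Z W) / cardR R Z.
Proof.
move=> VZ VW V0 ZW; apply: inf_le_ge0 => [_ [A' [B' [_ _ _ _ [_ ->]]]]|].
  by rewrite divr_ge0.
by exists Z, W; split; rewrite ?(fsubset_neq0 VZ) ?(fsubset_neq0 VW).
Qed.

Lemma alpha''_le V Z : (V `<=` Z)%fset -> V != fset0 ->
  alpha'' R V <= cardR R (sumset Z Z) / cardR R Z.
Proof.
move=> VZ V0; apply: inf_le_ge0 => [_ [A' [_ _ ->]]|]; first by rewrite divr_ge0.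
by exists Z; split; rewrite ?(fsubset_neq0 VZ).
Qed.

Lemma beta_le V A B : A != fset0 -> B != fset0 ->
  beta R V <= cardR R (sumset (sumset A B) V) / Num.sqrt (cardR R A * cardR R B).
Proof.
move=> A0 B0; apply: inf_le_ge0 => [_ [A' [B' [_ _ ->]]]|].
  by rewrite divr_ge0 ?sqrtr_ge0.
by exists A, B.
Qed.

Lemma beta''_le V A : A != fset0 ->
  beta'' R V <= cardR R (sumset (sumset A A) V) / cardR R A.
Proof.
move=> A0; apply: inf_le_ge0 => [_ [A' [_ ->]]|]; first by rewrite divr_ge0.
by exists A.
Qed.

Lemma le_alphaX V c n : V != fset0 ->
  (forall A B, (V `<=` A)%fset -> (V `<=` B)%fset -> (#|` B| <= #|` A|)%N ->
     c <= (cardR R (sumset A B) / Num.sqrt (cardR R A * cardR R B)) ^+ n) ->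
  c <= alpha R V ^+ n.
Proof.
move=> V0 cV; apply: le_inf_exprn => [|_ [A [B [_ _ _ _ ->]]]|_ [A [B [_ _ VA VB ->]]]].
- by eexists; exists V, V.
- by rewrite divr_ge0 ?sqrtr_ge0.
have [|/ltnW AB] := leqP #|` B| #|` A|; first exact: cV.
by rewrite sumsetC (mulrC (cardR R A)); apply: cV.
Qed.

Lemma le_betaX V c n :
  (forall A B, A != fset0 -> B != fset0 ->
     c <= (cardR R (sumset (sumset A B) V) / Num.sqrt (cardR R A * cardR R B)) ^+ n) ->
  c <= beta R V ^+ n.
Proof.
move=> cV; apply: le_inf_exprn => [|_ [A [B [_ _ ->]]]|_ [A [B [A0 B0 ->]]]].
- by eexists; exists [fset 0], [fset 0]; split; rewrite // -cardfs_gt0 cardfs1.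
- by rewrite divr_ge0 ?sqrtr_ge0.
- exact: cV.
Qed.

Lemma le_beta' V c :
  (forall A B, A != fset0 -> B != fset0 -> #|` A| = #|` B| ->
     c <= cardR R (sumset (sumset A B) V) / Num.sqrt (cardR R A * cardR R B)) ->
  c <= beta' R V.
Proof.
move=> cV; apply: lb_le_inf => [|_ [A [B [A0 B0 AB ->]]]]; last exact: cV.
by eexists; exists [fset 0], [fset 0]; split; rewrite // -cardfs_gt0 cardfs1.
Qed.

Lemma le_beta'' V c :
  (forall A, A != fset0 -> c <= cardR R (sumset (sumset A A) V) / cardR R A) ->
  c <= beta'' R V.
Proof.
move=> cV; apply: lb_le_inf => [|_ [A [A0 ->]]]; last exact: cV.
by eexists; exists [fset 0]; split; rewrite // -cardfs_gt0 cardfs1.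
Qed.

End InfimumBounds.

Section Bounds.
Variables (R : realType) (G : zmodType) (U : {fset G}).
Hypothesis U0 : U != fset0.
Local Open Scope ring_scope.
Implicit Types A B : {fset G}.

Lemma alpha_le_beta : alpha R U <= beta R U.
Proof.
rewrite -[beta R U]expr1; apply: le_betaX => A B A0 B0; rewrite expr1.
have [Z [W [UZ UW ZA WB]]] := exists_supersets_small_sumset U A0 B0.
apply: le_trans (alpha_le R UZ UW U0) _; rewrite /cardR -!natrM.
apply: ler_ratio_sqrt; rewrite ?muln_gt0 ?cardfs_gt0 ?A0 ?B0.
- by rewrite (fsubset_neq0 UZ U0) (fsubset_neq0 UW U0).
- by [].
by have := leq_mul ZA WB; rewrite !expnS expn0 !muln1 mulnACA [X in (_ <= X)%N]mulnACA.
Qed.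

Lemma alpha'_le_2beta' : alpha' R U <= 2 * beta' R U.
Proof.
rewrite -ler_pdivrMl //; apply: le_beta' => A B A0 B0 AB; rewrite ler_pdivrMl //.
have [Z [W [UZ UW ZW ZWA]]] := exists_equal_supersets_small_sumset A0 B0 U0 AB.
apply: le_trans (alpha'_le R UZ UW U0 ZW) _.
rewrite /cardR -AB -natrM natrM -expr2 sqrtr_sqr ger0_norm // mulrA -natrM.
by apply: ler_ratio; rewrite ?cardfs_gt0 ?(fsubset_neq0 UZ U0) // mulnA.
Qed.

Lemma alpha''_le_beta'' : alpha'' R U <= beta'' R U.
Proof.
apply: le_beta'' => A A0; have [Z UZ ZA] := exists_superset_small_doubling U A0.
apply: le_trans (alpha''_le R UZ U0) _.
by apply: ler_ratio; rewrite ?cardfs_gt0 ?(fsubset_neq0 UZ U0).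
Qed.

Lemma beta_le_alpha2 : beta R U <= alpha R U ^+ 2.
Proof.
apply: le_alphaX => // A B UA UB BA.
have A0 := fsubset_neq0 UA U0; have B0 := fsubset_neq0 UB U0.
have [X [XA X0 XAg XD]] := exists_petridis_subset B A0.
have XBU : (#|` sumset (sumset X B) U| <= #|` sumset X (nfold B 2)|)%N.
  by rewrite nfold2 -sumsetA fsubset_leq_card // !sumsetS.
apply: le_trans (beta_le R U X0 B0) _; rewrite /cardR -!natrM.
apply: ler_ratio_sqrt_sqr; rewrite ?cardfs_gt0 ?(fsubset_leq_card XA) //.
exact: leq_trans (leq_mul XBU (leqnn _)) (card_sumset_nfold X0 XAg XD 2).
Qed.

Lemma alpha''_le_alpha2 : alpha'' R U <= alpha R U ^+ 2.
Proof.
apply: le_alphaX => // A B UA UB BA.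
have A0 := fsubset_neq0 UA U0; have B0 := fsubset_neq0 UB U0.
apply: le_trans (alpha''_le R UB U0) _; rewrite /cardR -natrM.
apply: ler_ratio_sqr; rewrite ?cardfs_gt0 //.
by have := plunnecke_ruzsa B 1 A0; rewrite nfold2 expn1.
Qed.

Lemma beta''_le_alpha3 : beta'' R U <= alpha R U ^+ 3.
Proof.
apply: le_alphaX => // A B UA UB BA.
have A0 := fsubset_neq0 UA U0; have B0 := fsubset_neq0 UB U0.
have BBU : (#|` sumset (sumset B B) U| <= #|` nfold B 3|)%N.
  by rewrite nfold3 fsubset_leq_card // sumsetS.
apply: le_trans (beta''_le R U B0) _; rewrite /cardR -natrM.
apply: ler_ratio_cube; rewrite ?cardfs_gt0 //.
exact: leq_trans (leq_mul BBU (leqnn _)) (plunnecke_ruzsa B 2 A0).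
Qed.

Lemma beta''_le_beta''_sumset : beta'' R U <= beta'' R (sumset U U).
Proof.
apply: le_beta'' => A A0; apply: le_trans (beta''_le R U A0) _.
by rewrite ler_ratio ?cardfs_gt0 // leq_mul2r sumsetA (leq_card_sumsetl _ U0) orbT.
Qed.

Lemma beta''_sumset_le_beta2 : beta'' R (sumset U U) <= beta R U ^+ 2.
Proof.
apply: le_betaX => A B A0 B0.
apply: le_trans (beta''_le R (sumset U U) B0) _; rewrite /cardR -natrM.
apply: ler_ratio_sqr; rewrite ?cardfs_gt0 //.
have := plunnecke_ruzsa (sumset B U) 1 A0.
by rewrite nfold2 sumsetACA [sumset A _]sumsetA expn1.
Qed.

End Bounds.

Theorem mainTheorem16 (R : realType) (G : zmodType) (U : {fset G})
    (hU : U != fset0) :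
  [/\ alpha R U <= beta R U,
      alpha' R U <= 4 * beta' R U,
      alpha'' R U <= 3 * beta'' R U &
      beta R U <= alpha R U ^+ 2] /\
  [/\ beta'' R U <= alpha R U ^+ 3,
      alpha'' R U <= alpha R U ^+ 2,
      beta'' R U <= beta'' R (sumset U U) &
      beta'' R (sumset U U) <= beta R U ^+ 2].
Proof.
have beta'_ge0 : 0 <= beta' R U.
  by apply: le_beta' => A B _ _ _; rewrite divr_ge0 ?sqrtr_ge0.
have beta''_ge0 : 0 <= beta'' R U by apply: le_beta'' => A _; rewrite divr_ge0.
split; split.
- exact: alpha_le_beta.
- by apply: le_trans (alpha'_le_2beta' R hU) _; lra.
- by apply: le_trans (alpha''_le_beta'' R hU) _; lra.
- exact: beta_le_alpha2.
- exact: beta''_le_alpha3.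
- exact: alpha''_le_alpha2.
- exact: beta''_le_beta''_sumset.
- exact: beta''_sumset_le_beta2.
Qed.
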